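(* Let $p\ge 5$ be a prime and $k$ an integer with $1\le k\le \frac{p-3}{2}$, and put $t=p-1-2k$. Then, modulo $p$, \[ (-1)^k 4^{2k-1} E_t \equiv 16^t S_t(0, \tfrac{1}{64}) + 2^t S_t(\tfrac{3}{8}, \tfrac{7}{16}) + (2^t + 4^t) S_t(\tfrac{7}{16}, \tfrac{15}{32}) + (2^t + 4^t + 8^t) S_t(\tfrac{15}{32}, \tfrac{31}{64}) + (2^t + 4^t + 8^t + 16^t) S_t(\tfrac{31}{64}, \tfrac{1}{2}). \]
   Context: $E_n$ denotes the $n$th Euler number, defined by $\sec z=\sum_{n\ge0}E_n\frac{z^n}{n!}$ (so $E_2=1$, $E_4=5$). For a prime $p$, an integer $\ell$ and real numbers $0\le x<y\le 1$, $S_\ell(x,y)=\sum_{xp<s<yp} s^\ell$, the sum over integers $s$ strictly between $xp$ and $yp$. Congruences between rational numbers modulo $p$ mean that the difference has $p$-adic valuation at least $1$. *)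

From mathcomp Require Import all_boot all_order all_algebra.
Set Implicit Arguments. Unset Strict Implicit. Unset Printing Implicit Defensive.
Import Order.TTheory GRing.Theory Num.Theory.
Local Open Scope ring_scope.

(* Euler numbers (sec convention): sec z = sum_n E_n z^n / n!.
   Coefficient comparison in cos z * sec z = 1 gives E_0 = 1, E_odd = 0 and
   E_{2m} = sum_{j=1}^{m} (-1)^(j+1) C(2m,2j) E_{2m-2j}  (m >= 1). *)
Definition euler_next (m : nat) (s : seq int) : int :=
  if odd m then 0
  else \sum_(1 <= j < (m./2).+1)
         (-1) ^+ j.+1 * ('C(m, 2 * j))%:Z * nth 0 s (m - 2 * j)%N.

Fixpoint euler_seq (n : nat) : seq int :=
  match n with
  | 0 => [:: 1]
  | n'.+1 => let s := euler_seq n' in rcons s (euler_next n'.+1 s)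
  end.

Definition euler (n : nat) : int := nth 0 (euler_seq n) n.

(* S_l(x,y) = sum of s^l over integers s with x p < s < y p, for 0 <= x < y <= 1
   (such s lie in [0, p]). *)
Definition S (p l : nat) (x y : rat) : int :=
  \sum_(0 <= s < p.+1 | (x * p%:R < s%:R) && (s%:R < y * p%:R)) (s%:Z) ^+ l.

From mathcomp Require Import all_boot all_order all_algebra all_field.
From mathcomp Require Import zify ring.
Set Implicit Arguments. Unset Strict Implicit. Unset Printing Implicit Defensive.
Import Order.TTheory GRing.Theory Num.Theory.
Local Open Scope ring_scope.

(* Let G_t(z) = 2^t E_t((z + 1)/2), E_t the Euler polynomial, so that
   G_t(z + 1) + G_t(z - 1) = 2 z^t, G_t(0) = (-1)^(t/2) E_t and, t being even, G_t(1) = 0.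
   Summing the first identity at z = 2s with sign (-1)^s over s <= N, where p = 2N + 1,
   telescopes modulo p to (-1)^N G_t(0) = 2^(t+1) sum_{s <= N} (-1)^s s^t.  As 0 < t < p - 1
   the full power sum vanishes mod p, hence so does sum_{s <= N} s^t (t is even), and the
   alternating sum equals 2^(t+1) sum_{s < p/4} s^t.  Splitting a sum over s < p/m into even
   and odd s, and reflecting s -> p - s on the odd part, gives
     sum_{s < p/m} = 2^t (sum_{s < p/2m} + sum_{(m-1)p/2m < s < p/2});
   iterating from m = 4 to m = 32 and using 4^(p-1) = 1 produces the five intervals. *)

Lemma sum_even_odd (R : nmodType) (h : nat -> R) n :
  \sum_(r < (2 * n)%N) h r = \sum_(s < n) h (2 * s)%N + \sum_(s < n) h (2 * s).+1.
Proof.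
elim: n => [|n IHn]; first by rewrite !big_ord0 addr0.
rewrite (_ : 2 * n.+1 = (2 * n).+2)%N; last by lia.
rewrite !big_ord_recr /= IHn -!addrA; congr (_ + _).
by rewrite addrCA.
Qed.

Lemma big_nat_widen0 (R : nmodType) m n (F : nat -> R) : (m <= n)%N ->
  (forall i, (m <= i < n)%N -> F i = 0) ->
  \sum_(0 <= i < m) F i = \sum_(0 <= i < n) F i.
Proof.
move=> le_mn F0; rewrite [RHS](@big_cat_nat _ _ _ m) //= [X in _ + X]big1_seq ?addr0 //.
by move=> i; rewrite mem_index_iota => /F0.
Qed.

Lemma mul_bin_sub t i j : (i <= t)%N -> (j <= t)%N ->
  ('C(t, j) * 'C(t - j, i) = 'C(t, i) * 'C(t - i, j))%N.
Proof.
move=> le_it le_jt; case: (leqP (i + j) t) => [le_ijt | lt_tij]; last first.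
  rewrite (@bin_small (t - j) i) ?(@bin_small (t - i) j) ?muln0 //; lia.
have facts_gt0 : (0 < i`! * j`! * (t - i - j)`!)%N by rewrite !muln_gt0 !fact_gt0.
apply/eqP; rewrite -(eqn_pmul2r facts_gt0); apply/eqP.
have Ctj := @bin_fact t j; have Cti := @bin_fact t i.
have Ctji := @bin_fact (t - j) i; have Ctij := @bin_fact (t - i) j.
rewrite (subnAC t i j) in Ctij *.
transitivity ('C(t, j) * ('C(t - j, i) * (i`! * (t - j - i)`!)) * j`!)%N; first ring.
rewrite Ctji; last by lia.
transitivity ('C(t, i) * ('C(t - i, j) * (j`! * (t - j - i)`!)) * i`!)%N; last ring.
rewrite Ctij; last by lia.
by rewrite mulnAC -mulnA Ctj // -mulnA [(_ * i`!)%N]mulnC Cti.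
Qed.

Definition appell (R : comPzRingType) (h : nat -> R) t (z : R) : R :=
  \sum_(0 <= j < t.+1) 'C(t, j)%:R * h j * z ^+ (t - j).

Lemma appellD (R : comPzRingType) (h : nat -> R) t z w :
  appell h t (z + w) = \sum_(0 <= i < t.+1) 'C(t, i)%:R * z ^+ i * appell h (t - i) w.
Proof.
transitivity (\sum_(0 <= j < t.+1) \sum_(0 <= i < t.+1)
   ('C(t, j) * 'C(t - j, i))%:R * h j * w ^+ (t - j - i) * z ^+ i).
  rewrite /appell !big_nat; apply: eq_bigr => j /andP [_ le_jt].
  rewrite addrC exprDn -(big_mkord xpredT (fun i => w ^+ (t - j - i) * z ^+ i *+ 'C(t - j, i))).
  rewrite (@big_nat_widen0 _ (t - j).+1 t.+1); last 2 first.
  - by lia.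
  - by move=> i lt_tji; rewrite bin_small ?mulr0n //; lia.
  rewrite mulr_sumr big_nat [RHS]big_nat; apply: eq_bigr => i _.
  rewrite natrM -mulr_natr; ring.
rewrite exchange_big_nat /= /appell !big_nat; apply: eq_bigr => i /andP [_ le_it].
rewrite (@big_nat_widen0 _ (t - i).+1 t.+1); last 2 first.
- by lia.
- by move=> j lt_tij; rewrite bin_small ?mul0r ?mulr0 //; lia.
rewrite mulr_sumr !big_nat; apply: eq_bigr => j /andP [_ le_jt].
rewrite mul_bin_sub; try lia.
rewrite natrM (subnAC t j i); ring.
Qed.

Lemma size_euler_seq n : size (euler_seq n) = n.+1.
Proof. by elim: n => [|n IHn] //=; rewrite size_rcons IHn. Qed.

Lemma nth_euler_seq n j : (j <= n)%N -> nth 0 (euler_seq n) j = euler j.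
Proof.
rewrite /euler; elim: n => [|n IHn]; first by rewrite leqn0 => /eqP ->.
rewrite leq_eqVlt => /orP [/eqP -> // | lt_jn].
by rewrite /= nth_rcons size_euler_seq lt_jn IHn.
Qed.

Lemma eulerS m : euler m.+1 = euler_next m.+1 (euler_seq m).
Proof. by rewrite /euler /= nth_rcons size_euler_seq ltnn eqxx. Qed.

Lemma euler_double M : (0 < M)%N -> euler (2 * M) =
  \sum_(1 <= j < M.+1) (-1) ^+ j.+1 * ('C(2 * M, 2 * j))%:Z * euler (2 * M - 2 * j).
Proof.
case: M => // M _; rewrite (_ : 2 * M.+1 = (2 * M).+2)%N; last by lia.
rewrite eulerS /euler_next.
have -> : odd (2 * M).+2 = false by rewrite !oddS oddM.
have -> : ((2 * M).+2)./2 = M.+1 by rewrite mul2n -!doubleS doubleK.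
by rewrite !big_nat; apply: eq_bigr => j /andP [j_gt0 _]; rewrite nth_euler_seq //; lia.
Qed.

(* The Euler numbers of the convention sech z = sum_j signed_euler j z^j / j!. *)
Definition signed_euler (R : pzRingType) (j : nat) : R :=
  if odd j then 0 else (-1) ^+ j./2 * (euler j)%:~R.

Lemma signed_euler_double (R : pzRingType) l :
  signed_euler R (2 * l) = (-1) ^+ l * (euler (2 * l))%:~R.
Proof. by rewrite /signed_euler oddM /= mul2n doubleK. Qed.

(* The recurrence defining [euler (2 * M)], summed from its top term downwards. *)
Lemma sum_signed_euler_double (R : comPzRingType) M :
  \sum_(0 <= j < (2 * M).+1) 'C(2 * M, j)%:R * signed_euler R j = (M == 0)%:R.
Proof.
case: (posnP M) => [-> | M_gt0].
  by rewrite muln0 big_nat1 bin0 mul1r /signed_euler /= mul1r.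
rewrite (@big_nat_widen0 _ _ (2 * M.+1)); last 2 first.
- by lia.
- by move=> j /andP [lt_2Mj _]; rewrite bin_small ?mul0r.
rewrite big_mkord (sum_even_odd (fun j => 'C(2 * M, j)%:R * signed_euler R j)).
rewrite [X in _ + X]big1 ?addr0; last first.
  by move=> l _; rewrite /signed_euler oddS oddM mulr0.
rewrite -(big_mkord xpredT (fun l => 'C(2 * M, 2 * l)%:R * signed_euler R (2 * l))).
rewrite big_nat_rev big_ltn //= add0n subn1 /=.
rewrite signed_euler_double euler_double //.
rewrite rmorph_sum /= !mulr_sumr -big_split /=.
rewrite big_nat big1 // => l /andP [l_gt0 lt_lM].
rewrite subSS signed_euler_double.
have -> : (2 * (M - l) = 2 * M - 2 * l)%N by lia.
rewrite bin_sub; last by lia.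
have sgnM : (-1) ^+ M = (-1) ^+ (M - l) * (-1) ^+ l :> R by rewrite -exprD subnK //; lia.
have sgn2 : (-1) ^+ l * (-1) ^+ l = 1 :> R by rewrite -exprMn mulrNN mulr1 expr1n.
rewrite !rmorphM /= !rmorphXn /= sgnM exprS binn.
transitivity ((-1) ^+ (M - l) * 'C(2 * M, 2 * l)%:R * (euler (2 * M - 2 * l))%:~R
   * (1 - (-1) ^+ l * (-1) ^+ l) : R); first by ring.
by rewrite sgn2 subrr mulr0.
Qed.

(* [euler_poly2 t z] = 2^t E_t((z + 1)/2), where E_t is the t-th Euler polynomial. *)
Definition euler_poly2 (R : comPzRingType) t (z : R) : R := appell (@signed_euler R) t z.

Lemma euler_poly2_pm1 (R : comPzRingType) m :
  euler_poly2 m (1 : R) + euler_poly2 m (-1) = 2 * (m == 0)%:R.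
Proof.
transitivity ((1 + (-1) ^+ m) *
    \sum_(0 <= j < m.+1) 'C(m, j)%:R * signed_euler R j).
  rewrite /euler_poly2 /appell -big_split mulr_sumr !big_nat /=.
  apply: eq_bigr => j le_jm.
  rewrite /signed_euler; case: ifP => [_ | even_j]; first by rewrite !mulr0 !mul0r addr0.
  rewrite -(signr_odd _ (m - j)) -(signr_odd _ m) expr1n oddB // even_j addbF.
  ring.
rewrite -(signr_odd _ m); case: (boolP (odd m)) => [odd_m | even_m].
  have /negbTE -> : m != 0%N by case: m odd_m.
  by rewrite expr1 addrN mul0r mulr0.
have -> : m = (2 * m./2)%N by rewrite -{1}(odd_double_half m) (negbTE even_m) mul2n.
by rewrite sum_signed_euler_double expr0 muln_eq0.
Qed.

Lemma euler_poly2DN (R : comPzRingType) t (z : R) :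
  euler_poly2 t (z + 1) + euler_poly2 t (z - 1) = 2 * z ^+ t.
Proof.
have pm1 := euler_poly2_pm1 R; rewrite /euler_poly2 in pm1 *.
rewrite !appellD -big_split big_nat_recr //= big_nat big1 ?add0r.
  by rewrite -mulrDr pm1 subnn binn mul1r mulr1 mulrC.
move=> i /andP [_ lt_it].
by rewrite -mulrDr pm1 (_ : (t - i == 0)%N = false) ?mulr0 // subn_eq0 leqNgt lt_it.
Qed.

Lemma euler_poly2N (R : comPzRingType) t (z : R) :
  ~~ odd t -> euler_poly2 t (- z) = euler_poly2 t z.
Proof.
move=> even_t; rewrite /euler_poly2 /appell !big_nat; apply: eq_bigr => j /andP [_ le_jt].
rewrite /signed_euler; case: ifP => [_ | even_j]; first by rewrite !mulr0 !mul0r.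
by rewrite [(- z) ^+ _]exprNn -(signr_odd _ (t - j)) oddB // even_j (negbTE even_t) mul1r.
Qed.

Lemma euler_poly2_0 (R : comPzRingType) t : euler_poly2 t (0 : R) = signed_euler R t.
Proof.
rewrite /euler_poly2 /appell big_nat_recr //= big_nat big1 ?add0r.
  by rewrite subnn expr0 mulr1 binn mul1r.
by move=> j /andP [_ lt_jt]; rewrite expr0n subn_eq0 leqNgt lt_jt mulr0.
Qed.

Lemma euler_poly2_1 (R : idomainType) t : (2 : R) != 0 -> ~~ odd t -> (0 < t)%N ->
  euler_poly2 t (1 : R) = 0.
Proof.
move=> two_neq0 even_t t_gt0; have := euler_poly2_pm1 R t.
rewrite euler_poly2N // (gtn_eqF t_gt0) mulr0 -mulr2n => /eqP.
by rewrite -mulr_natl mulf_eq0 (negbTE two_neq0) => /eqP.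
Qed.

Lemma sum_alternating_even_powers (R : comPzRingType) t n : (0 < t)%N ->
  \sum_(0 <= s < n.+1) (-1) ^+ s * (2 * ((2 * s)%:R : R) ^+ t) =
  (-1) ^+ n * euler_poly2 t ((2 * n).+1%:R : R) - euler_poly2 t 1.
Proof.
move=> t_gt0; elim: n => [|n IHn].
  by rewrite big_nat1 mul1r expr0n (gtn_eqF t_gt0) mulr0 mul1r subrr.
rewrite big_nat_recr //= IHn.
have e1 : ((2 * n.+1)%:R : R) = (2 * n).+1%:R + 1 by rewrite natr1 mulnS.
have e2 : ((2 * n.+1).+1%:R : R) = (2 * n).+1%:R + 1 + 1 by rewrite -e1 natr1.
have := euler_poly2DN t ((2 * n).+1%:R + 1 : R); rewrite addrK => shift.
by rewrite e1 e2 -shift exprS; ring.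
Qed.

Lemma expf_card_pred (F : finFieldType) (x : F) : x != 0 -> x ^+ #|F|.-1 = 1.
Proof.
move=> x_neq0; apply: (mulIf x_neq0); rewrite mul1r -exprSr prednK ?expf_card //.
by rewrite (cardD1 0).
Qed.

Lemma sum_expr_finField (F : finFieldType) t : (0 < t < #|F|.-1)%N ->
  \sum_(x : F) x ^+ t = 0.
Proof.
case/andP=> t_gt0 t_lt; have [g g_neq0 gt_neq1] : exists2 g : F, g != 0 & g ^+ t != 1.
  case: (pickP (fun g : F => (g != 0) && (g ^+ t != 1))) => [g /andP [] | no_g].
    by exists g.
  have roots : all (root ('X^t - 1%:P)) (enum (predC1 (0 : F))).
    apply/allP => x; rewrite mem_enum inE => x_neq0.
    have := no_g x; rewrite x_neq0 /= => /negbFE/eqP xt1.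
    by rewrite rootE !hornerE xt1 subrr.
  have XnsubC_neq0 : ('X^t - 1%:P : {poly F}) != 0 by rewrite -size_poly_eq0 size_XnsubC.
  have := max_poly_roots XnsubC_neq0 roots (enum_uniq _).
  by rewrite size_XnsubC // -cardE cardC1 ltnS leqNgt t_lt.
have /eqP : \sum_(x : F) x ^+ t = g ^+ t * \sum_(x : F) x ^+ t.
  rewrite {1}(reindex_inj (mulfI g_neq0)) mulr_sumr /=.
  by apply: eq_bigr => x _; rewrite exprMn.
rewrite -subr_eq0 -{1}(mul1r (\sum_x _)) -mulrBl mulf_eq0 subr_eq0 eq_sym.
by rewrite (negbTE gt_neq1) => /eqP.
Qed.

Section PowerSumsModp.

Variables (p t : nat).
Hypotheses (p_pr : prime p) (p_odd : odd p).
Hypotheses (t_gt0 : (0 < t)%N) (t_even : ~~ odd t) (t_lt : (t < p.-1)%N).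

Local Notation N := p./2.

Lemma p_double_half : p = (2 * N).+1.
Proof. by rewrite -{1}(odd_double_half p) p_odd mul2n. Qed.

Lemma two_neq0_Fp : (2 : 'F_p) != 0.
Proof.
rewrite -(dvdn_pcharf (pchar_Fp p_pr)); apply/negP => /(dvdn_leq (isT : 0 < 2)%N).
by rewrite leqNgt odd_prime_gt2.
Qed.

Definition pow_t (s : nat) : 'F_p := s%:R ^+ t.

Lemma pow_t0 : pow_t 0 = 0.
Proof. by rewrite /pow_t expr0n (gtn_eqF t_gt0). Qed.

Lemma pow_t_p : pow_t p = 0.
Proof. by rewrite /pow_t pchar_Fp_0 // expr0n (gtn_eqF t_gt0). Qed.

Lemma pow_t_double s : pow_t (2 * s) = 2 ^+ t * pow_t s.
Proof. by rewrite /pow_t natrM exprMn. Qed.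

Lemma pow_t_reflect s : (s <= p)%N -> pow_t (p - s) = pow_t s.
Proof.
move=> le_sp; rewrite /pow_t natrB // pchar_Fp_0 // sub0r exprNn -signr_odd.
by rewrite (negbTE t_even) mul1r.
Qed.

Definition psum (C : pred nat) : 'F_p := \sum_(0 <= s < p.+1 | C s) pow_t s.

Lemma eq_psum (C1 C2 : pred nat) : (forall s, (s <= p)%N -> C1 s = C2 s) ->
  psum C1 = psum C2.
Proof.
move=> eqC; rewrite /psum big_nat_cond [RHS]big_nat_cond; apply: eq_bigl => s.
by case: (ltnP s p.+1) => //= le_sp; rewrite eqC.
Qed.

Lemma psum_split (C C1 C2 : pred nat) :
  (forall s, (s <= p)%N -> C s = C1 s || C2 s) ->
  (forall s, (s <= p)%N -> ~~ (C1 s && C2 s)) -> psum C = psum C1 + psum C2.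
Proof.
move=> C_or C_dis; rewrite /psum (bigID C1) /=; congr (_ + _).
  rewrite big_nat_cond [RHS]big_nat_cond; apply: eq_bigl => s.
  by case: (ltnP s p.+1) => //= le_sp; rewrite C_or // andbC; case: (C1 s).
rewrite big_nat_cond [RHS]big_nat_cond; apply: eq_bigl => s.
case: (ltnP s p.+1) => //= le_sp; rewrite C_or //; move: (C_dis s le_sp).
by case: (C1 s); case: (C2 s).
Qed.

Lemma psum_le_half (P : pred nat) :
  psum (fun s => (s <= N)%N && P s) = \sum_(0 <= s < N.+1 | P s) pow_t s.
Proof.
rewrite (@big_nat_widen _ _ _ 0 N.+1 p.+1); last by have := p_double_half; lia.
by apply: eq_psum => s _; rewrite andbC.
Qed.

(* Split [0, p] into even and odd integers; the odd [2 r + 1 = p - 2 (N - r)] are reflected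
   to the even [2 (N - r)]. *)
Lemma psum_halve (C : pred nat) :
  psum C = 2 ^+ t * (psum (fun r => (r <= N)%N && C (2 * r)%N)
                     + psum (fun r => (r <= N)%N && C (p - 2 * r)%N)).
Proof.
rewrite !psum_le_half mulrDr /psum big_mkcond big_mkord.
rewrite (_ : p.+1 = 2 * N.+1)%N; last by have := p_double_half; lia.
rewrite (sum_even_odd (fun r => if C r then pow_t r else 0)); congr (_ + _).
  rewrite mulr_sumr big_mkord [RHS]big_mkcond; apply: eq_bigr => r _ /=.
  by case: ifP; rewrite ?mulr0 // pow_t_double.
rewrite mulr_sumr [RHS]big_mkcond /=.
rewrite -(big_mkord xpredT (fun r => if C (2 * r).+1 then pow_t (2 * r).+1 else 0)).
rewrite big_nat_rev !big_nat; apply: eq_bigr => r /andP [_ le_rN].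
rewrite add0n subSS (_ : (2 * (N - r)).+1 = p - 2 * r)%N; last by have := p_double_half; lia.
by case: ifP; rewrite ?mulr0 // pow_t_reflect ?pow_t_double //; have := p_double_half; lia.
Qed.

Lemma sum_pow_t : \sum_(0 <= s < p) pow_t s = 0.
Proof.
rewrite -[in X in \sum_(0 <= s < X) _](Fp_cast p_pr) big_mkord -[RHS](@sum_expr_finField _ t).
  by apply: eq_bigr => i _; rewrite /pow_t natr_Zp.
by rewrite card_Fp // t_gt0.
Qed.

(* [psum_halve] on the full range [0, p], where the power sum vanishes, gives 2^(t+1) times
   this half sum. *)
Lemma sum_pow_t_le_half : \sum_(0 <= s < N.+1) pow_t s = 0.
Proof.
have psumT : psum predT = 0 by rewrite /psum big_nat_recr //= sum_pow_t pow_t_p addr0.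
have := psum_halve predT; rewrite psumT => /esym/eqP.
rewrite mulf_eq0 expf_eq0 (negbTE two_neq0_Fp) andbF -mulr2n -mulr_natl mulf_eq0.
by rewrite (negbTE two_neq0_Fp) => /eqP; rewrite -(psum_le_half xpredT).
Qed.

Lemma psum_even_le_half :
  \sum_(0 <= s < N.+1 | ~~ odd s) pow_t s = 2 ^+ t * psum (fun s => 4 * s < p)%N.
Proof.
rewrite -psum_le_half psum_halve.
rewrite [X in _ + X](_ : _ = 0) ?addr0; last first.
  rewrite /psum big_pred0 // => s; apply/negbTE; apply/andP => -[le_sN /andP [_]].
  by rewrite oddB ?p_odd ?oddM //; have := p_double_half; lia.
congr (_ * _); apply: eq_psum => s _; rewrite oddM andbT.
by apply/idP/idP; have := p_double_half; lia.
Qed.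

Lemma sum_alternating_pow_t :
  \sum_(0 <= s < N.+1) (-1) ^+ s * pow_t s = 2 * 2 ^+ t * psum (fun s => 4 * s < p)%N.
Proof.
rewrite -[LHS]addr0 -[X in _ + X]sum_pow_t_le_half -big_split -mulrA -psum_even_le_half.
rewrite mulr_sumr [RHS]big_mkcond /=; apply: eq_bigr => s _.
rewrite -signr_odd; case: (odd s) => /=; first by rewrite expr1 mulN1r addNr.
by rewrite expr0 mul1r -mulr2n mulr_natl.
Qed.

Lemma euler_psum_quarter :
  (-1) ^+ N * signed_euler 'F_p t = 4 ^+ t.+1 * psum (fun s => 4 * s < p)%N.
Proof.
have := sum_alternating_even_powers 'F_p N t_gt0.
rewrite -p_double_half pchar_Fp_0 // euler_poly2_0 euler_poly2_1 ?two_neq0_Fp // subr0 => <-.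
have -> : (4 : 'F_p) = 2 * 2 by rewrite -natrM.
rewrite exprS exprMn.
transitivity (2 * 2 ^+ t * (2 * 2 ^+ t * psum (fun s => 4 * s < p)%N)); last by ring.
rewrite -sum_alternating_pow_t !mulr_sumr.
by apply: eq_bigr => s _; rewrite -[(2 * s)%:R ^+ t]/(pow_t (2 * s)) pow_t_double; ring.
Qed.

Definition psum_between (a b c d : nat) : 'F_p :=
  psum (fun s => (a * p < b * s) && (d * s < c * p))%N.

Lemma S_Fp a b c d : (0 < b)%N -> (0 < d)%N ->
  (S p t (a%:R / b%:R) (c%:R / d%:R))%:~R = psum_between a b c d.
Proof.
move=> b_gt0 d_gt0; rewrite /S rmorph_sum /psum_between /psum.
apply: eq_big => [s | s _]; last by rewrite rmorphXn.
rewrite mulrAC ltr_pdivrMr ?ltr0n // mulrAC ltr_pdivlMr ?ltr0n // -!natrM !ltr_nat.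
by rewrite (mulnC s b) (mulnC s d).
Qed.

Lemma psum_between0 m : psum_between 0 1 1 m = psum (fun s => m * s < p)%N.
Proof.
rewrite [RHS](@psum_split _ (fun s => (0 * p < 1 * s) && (m * s < 1 * p))%N (pred1 0%N)).
- have -> : psum (pred1 0%N) = 0 by rewrite /psum big1 // => s /eqP ->; exact: pow_t0.
  by rewrite addr0.
- by move=> s _ /=; lia.
- by move=> s _ /=; lia.
Qed.

Lemma psum_halve_below m : (0 < m)%N ->
  psum (fun s => m * s < p)%N =
  2 ^+ t * (psum (fun s => 2 * m * s < p)%N + psum_between (m - 1) (2 * m) 1 2).
Proof.
move=> m_gt0; have := p_double_half; rewrite psum_halve => pN; congr (_ * (_ + _)).
  by apply: eq_psum => s _; apply/idP/idP; nia.
apply: eq_psum => s _; apply/idP/idP => [/andP [le_sN lt_p] | /andP [lt_s lt_p]].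
  by apply/andP; split; nia.
by apply/andP; split; nia.
Qed.

Lemma psum_quarter_decomp :
  psum (fun s => 4 * s < p)%N =
    16 ^+ t * psum_between 0 1 1 64
  + 2 ^+ t * psum_between 3 8 7 16
  + (2 ^+ t + 4 ^+ t) * psum_between 7 16 15 32
  + (2 ^+ t + 4 ^+ t + 8 ^+ t) * psum_between 15 32 31 64
  + (2 ^+ t + 4 ^+ t + 8 ^+ t + 16 ^+ t) * psum_between 31 64 1 2.
Proof.
have pN := p_double_half.
rewrite (@psum_halve_below 4 isT) (@psum_halve_below 8 isT) (@psum_halve_below 16 isT).
rewrite (@psum_halve_below 32 isT) -psum_between0 /=.
have -> : psum_between 3 8 1 2 = psum_between 3 8 7 16 + psum_between 7 16 1 2.
  by apply: psum_split => s _ /=; lia.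
have -> : psum_between 7 16 1 2 = psum_between 7 16 15 32 + psum_between 15 32 1 2.
  by apply: psum_split => s _ /=; lia.
have -> : psum_between 15 32 1 2 = psum_between 15 32 31 64 + psum_between 31 64 1 2.
  by apply: psum_split => s _ /=; lia.
have pow2 n : (2 ^ n)%:R ^+ t = (2 ^+ t) ^+ n :> 'F_p by rewrite natrX exprAC.
rewrite [4%:R ^+ t](pow2 2) [8%:R ^+ t](pow2 3) [16%:R ^+ t](pow2 4).
ring.
Qed.

Lemma euler_quarter k : t = (p.-1 - 2 * k)%N -> (0 < k)%N ->
  (-1) ^+ k * 4 ^+ (2 * k - 1) * (euler t)%:~R = psum (fun s => 4 * s < p)%N.
Proof.
move=> tE k_gt0; have pN := p_double_half.
have four_neq0 : (4 : 'F_p) != 0 by rewrite -[4%:R]/((2 * 2)%:R) natrM mulf_neq0 ?two_neq0_Fp.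
have fermat4 : (4 : 'F_p) ^+ p.-1 = 1 by have := expf_card_pred four_neq0; rewrite card_Fp.
have half_t : t./2 = (N - k)%N by rewrite tE (_ : _ - _ = 2 * (N - k))%N ?mul2n ?doubleK //; lia.
have sgnN : (-1) ^+ N = (-1) ^+ (N - k) * (-1) ^+ k :> 'F_p by rewrite -exprD subnK //; lia.
have sgn2 : (-1) ^+ (N - k) * (-1) ^+ (N - k) = 1 :> 'F_p by rewrite -exprMn mulrNN mulr1 expr1n.
have := euler_psum_quarter; rewrite /signed_euler (negbTE t_even) half_t sgnN => key.
transitivity (4 ^+ p.-1 * psum (fun s => 4 * s < p)%N); last by rewrite fermat4 mul1r.
rewrite (_ : p.-1 = 2 * k - 1 + t.+1)%N; last by lia.
rewrite -[LHS]mul1r -{1}sgn2 exprD -[RHS]mulrA -key; ring.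
Qed.

End PowerSumsModp.

Theorem mainTheorem6 (p k : nat) :
  prime p -> (5 <= p)%N -> (1 <= k)%N -> (k <= (p - 3) %/ 2)%N ->
  let t := (p - 1 - 2 * k)%N in
  (((-1) ^+ k * 4 ^+ (2 * k - 1) * euler t
    == 16 ^+ t * S p t 0 (1/64)
       + 2 ^+ t * S p t (3/8) (7/16)
       + (2 ^+ t + 4 ^+ t) * S p t (7/16) (15/32)
       + (2 ^+ t + 4 ^+ t + 8 ^+ t) * S p t (15/32) (31/64)
       + (2 ^+ t + 4 ^+ t + 8 ^+ t + 16 ^+ t) * S p t (31/64) (1/2)
    %[mod (p%:Z)])%Z).
Proof.
move=> p_pr p_ge5 k_gt0 k_le /=; set t := (p - 1 - 2 * k)%N.
have p_odd : odd p by case: (even_prime p_pr) p_ge5 => [-> |].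
have t_even : ~~ odd t by rewrite /t -subnDA oddB ?addn1 /= ?p_odd ?oddM //; lia.
have t_gt0 : (0 < t)%N by rewrite /t; lia.
have t_lt : (t < p.-1)%N by rewrite /t; lia.
rewrite eqz_mod_dvd (dvdz_pcharf (pchar_Fp p_pr)) rmorphB subr_eq0 /=.
(* The endpoints 0, 1/64, 3/8, ... match [a%:R / b%:R] only up to conversion. *)
rewrite !rmorphD !rmorphM !rmorphXn /= (@S_Fp p t 0 1 1 64) // (@S_Fp p t 3 8 7 16) //.
rewrite (@S_Fp p t 7 16 15 32) // (@S_Fp p t 15 32 31 64) // (@S_Fp p t 31 64 1 2) //.
rewrite !rmorphD !rmorphXn rmorphN1 (euler_quarter p_pr p_odd t_gt0 t_even t_lt _ k_gt0).
  exact/eqP/psum_quarter_decomp.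
by rewrite /t subn1.
Qed.
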